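(* Let $(X,d_1)$ and $(Y,d_2)$ be complete metric spaces, $k\ge2$, $0<\rho,\rho'<1$, and let $\mu:X^k\to X$ and $\nu:Y^k\to Y$ be nonexpansive $k$-means that are coordinatewise $\rho$-contractive and coordinatewise $\rho'$-contractive respectively. Equip $X\times Y$ with the sup metric $d((x,y),(x',y'))=\max\{d_1(x,x'),d_2(y,y')\}$. Then the product mean $\mu\times\nu$ is a nonexpansive, coordinatewise $\max\{\rho,\rho'\}$-contractive $k$-mean on $X\times Y$. Furthermore, for every $n\ge k$, the $n$-mean $(\mu\times\nu)_n$ obtained by iterated $\beta$-extension of $\mu\times\nu$ coincides with the product mean $\mu_n\times\nu_n$ of the iterated $\beta$-extensions $\mu_n,\nu_n$ of $\mu,\nu$.
   Context: A $k$-mean is a map $\mu:X^k\to X$ with $\mu(x,\ldots,x)=x$. Nonexpansive: $d(\mu(\mathbf{x}),\mu(\mathbf{y}))\le\max_j d(x_j,y_j)$; coordinatewise $\rho$-contractive: $d(\mu(\mathbf{x}),\mu(\mathbf{y}))\le\rho\,d(x_j,y_j)$ when $\mathbf{x},\mathbf{y}$ differ only in coordinate $j$. Product mean of $n$-means $\mu,\nu$: $(\mu\times\nu)((x_1,y_1),\ldots,(x_n,y_n))=(\mu(x_1,\ldots,x_n),\nu(y_1,\ldots,y_n))$. Barycentric operator of a $k$-mean: $\beta(\mathbf{x})_j=\mu(x_1,\ldots,\widehat{x_j},\ldots,x_{k+1})$; a $(k+1)$-mean $\tilde\mu$ $\beta$-extends $\mu$ if $\beta^m(\mathbf{x})\to(\tilde\mu(\mathbf{x}),\ldots,\tilde\mu(\mathbf{x}))$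 for all $\mathbf{x}$. For a nonexpansive coordinatewise $\rho$-contractive $k$-mean $\mu$ on a complete metric space, $\mu_k=\mu$ and $\mu_{n+1}$ denotes the unique continuous $\beta$-extension of $\mu_n$ (these exist for all $n\ge k$). *)

From Stdlib Require Import Reals.
From mathcomp Require Import all_boot.
Set Implicit Arguments. Unset Strict Implicit. Unset Printing Implicit Defensive.

Local Open Scope R_scope.

Definition is_metric (X : Type) (d : X -> X -> R) : Prop :=
  (forall x y, d x y = 0 <-> x = y) /\
  (forall x y, d x y = d y x) /\
  (forall x y z, d x z <= d x y + d y z).

Definition cauchy_seq (X : Type) (d : X -> X -> R) (u : nat -> X) : Prop :=
  forall eps, 0 < eps -> exists N : nat, forall m n : nat,
    (N <= m)%nat -> (N <= n)%nat -> d (u m) (u n) < eps.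

Definition seq_converges (X : Type) (d : X -> X -> R) (u : nat -> X) (l : X) : Prop :=
  forall eps, 0 < eps -> exists N : nat, forall n : nat,
    (N <= n)%nat -> d (u n) l < eps.

Definition complete_metric (X : Type) (d : X -> X -> R) : Prop :=
  forall u : nat -> X, cauchy_seq d u -> exists l, seq_converges d u l.

Definition sup_dist (X : Type) (d : X -> X -> R) (n : nat) (x y : 'I_n -> X) : R :=
  \big[Rmax/0]_(i < n) d (x i) (y i).

Definition prod_dist (X Y : Type) (d1 : X -> X -> R) (d2 : Y -> Y -> R)
  (p q : X * Y) : R := Rmax (d1 p.1 q.1) (d2 p.2 q.2).

Definition is_mean (X : Type) (n : nat) (mu : ('I_n -> X) -> X) : Prop :=
  forall x : X, mu (fun _ => x) = x.

Definition nonexpansive (X : Type) (d : X -> X -> R) (n : nat)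
  (mu : ('I_n -> X) -> X) : Prop :=
  forall x y : 'I_n -> X, d (mu x) (mu y) <= sup_dist d x y.

Definition coord_contractive (X : Type) (d : X -> X -> R) (n : nat) (rho : R)
  (mu : ('I_n -> X) -> X) : Prop :=
  forall (x y : 'I_n -> X) (j : 'I_n),
    (forall i, i != j -> x i = y i) -> d (mu x) (mu y) <= rho * d (x j) (y j).

Definition continuous_mean (X : Type) (d : X -> X -> R) (n : nat)
  (f : ('I_n -> X) -> X) : Prop :=
  forall (x : 'I_n -> X) eps, 0 < eps -> exists delta, 0 < delta /\
    forall y : 'I_n -> X, sup_dist d x y < delta -> d (f x) (f y) < eps.

Definition prod_mean (X Y : Type) (n : nat) (mu : ('I_n -> X) -> X)
  (nu : ('I_n -> Y) -> Y) : ('I_n -> X * Y) -> X * Y :=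
  fun z => (mu (fun i => (z i).1), nu (fun i => (z i).2)).

(** Barycentric operator of an n-mean: beta(x)_j = mu(x without x_j). *)
Definition barycentric (X : Type) (n : nat) (mu : ('I_n -> X) -> X)
  (x : 'I_n.+1 -> X) : 'I_n.+1 -> X :=
  fun j => mu (fun i : 'I_n => x (lift j i)).

Definition beta_extends (X : Type) (d : X -> X -> R) (n : nat)
  (mu : ('I_n -> X) -> X) (mut : ('I_n.+1 -> X) -> X) : Prop :=
  is_mean mut /\
  forall x : 'I_n.+1 -> X,
    seq_converges (@sup_dist X d n.+1)
      (fun m => iter m (barycentric mu) x) (fun _ => mut x).

Definition iterated_beta_ext (X : Type) (d : X -> X -> R) (k : nat)
  (mu : ('I_k -> X) -> X) (M : forall n : nat, ('I_n -> X) -> X) : Prop :=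
  M k = mu /\
  forall n : nat, (k <= n)%nat ->
    continuous_mean d (M n.+1) /\ beta_extends d (M n) (M n.+1).

From Stdlib Require Import Reals Lra FunctionalExtensionality.
From mathcomp Require Import all_boot.

(* The barycentric operator of a product mean acts coordinatewise, so the
   iterates of beta for mu x nu are the pairs of the iterates for mu and for nu,
   and they converge in the sup metric to the pair of the limits.  Hence
   mu_n x nu_n is a beta-extension of mu_(n-1) x nu_(n-1); since limits in a
   metric space are unique, a beta-extension is unique, and the identity
   (mu x nu)_n = mu_n x nu_n follows by induction on n.  Completeness and the
   contraction constants only serve to make the extensions exist. *)

Set Implicit Arguments.
Local Open Scope R_scope.

Section SupDist.

Variables (X : Type) (d : X -> X -> R).

Lemma sup_dist_ge0 n (x y : 'I_n -> X) : 0 <= sup_dist d x y.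
Proof.
rewrite /sup_dist; elim: (index_enum 'I_n) => [|j r IHr].
  by rewrite big_nil; apply: Rle_refl.
by rewrite big_cons; apply: Rle_trans IHr (Rmax_r _ _).
Qed.

Lemma le_sup_dist n (x y : 'I_n -> X) i : d (x i) (y i) <= sup_dist d x y.
Proof.
rewrite /sup_dist; have : i \in index_enum 'I_n by rewrite mem_index_enum.
elim: (index_enum 'I_n) => [//|j r IHr].
rewrite in_cons big_cons => /orP[/eqP <- | /IHr le_r]; first exact: Rmax_l.
exact: Rle_trans le_r (Rmax_r _ _).
Qed.

Lemma sup_dist_le n (x y : 'I_n -> X) c :
  0 <= c -> (forall i, d (x i) (y i) <= c) -> sup_dist d x y <= c.
Proof.
move=> c_ge0 le_c; apply: (big_ind (fun v => v <= c)) => //.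
by move=> a b; apply: Rmax_lub.
Qed.

Lemma seq_converges_coord n (u : nat -> 'I_n -> X) (a : 'I_n -> X) (i : 'I_n) :
  seq_converges (@sup_dist X d n) u a -> seq_converges d (fun m => u m i) (a i).
Proof.
move=> cvg_u eps eps_gt0; have [K HK] := cvg_u eps eps_gt0.
by exists K => m le_Km; apply: Rle_lt_trans (le_sup_dist _ _ i) (HK m le_Km).
Qed.

Hypothesis d_metric : is_metric d.

Lemma dist_ge0 x y : 0 <= d x y.
Proof.
case: d_metric => [d0 [dC dtri]]; have := dtri x y x.
by rewrite (dC y x) (proj2 (d0 x x) erefl); lra.
Qed.

Lemma seq_converges_unique u a b :
  seq_converges d u a -> seq_converges d u b -> a = b.
Proof.
move=> cvg_a cvg_b; case: (d_metric) => [d0 [dC dtri]]; apply/d0.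
case: (Rle_lt_or_eq_dec _ _ (dist_ge0 a b)) => [dab_gt0 | <-] //; exfalso.
have eps_gt0 : 0 < d a b / 2 by lra.
have [Ka Ha] := cvg_a _ eps_gt0; have [Kb Hb] := cvg_b _ eps_gt0.
set m := maxn Ka Kb.
have := Ha m (leq_maxl _ _); have := Hb m (leq_maxr _ _).
by have := dtri a (u m) b; rewrite (dC a (u m)); lra.
Qed.

Lemma beta_extends_unique n (A : ('I_n -> X) -> X) (C C' : ('I_n.+1 -> X) -> X) :
  beta_extends d A C -> beta_extends d A C' -> C = C'.
Proof.
move=> [_ cvgC] [_ cvgC']; apply: functional_extensionality => x.
exact: seq_converges_unique (seq_converges_coord ord0 (cvgC x))
                            (seq_converges_coord ord0 (cvgC' x)).
Qed.

End SupDist.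

Section ProductMean.

Variables (X Y : Type) (d1 : X -> X -> R) (d2 : Y -> Y -> R).

Local Notation d := (prod_dist d1 d2).

Lemma prod_dist_is_metric : is_metric d1 -> is_metric d2 -> is_metric d.
Proof.
move=> m1 m2; have [d01 [dC1 dtri1]] := m1; have [d02 [dC2 dtri2]] := m2.
split; [|split]; rewrite /prod_dist.
- move=> [x1 x2] [y1 y2] /=; split=> [dxy0 | [<- <-]].
  + have le1 := Rmax_l (d1 x1 y1) (d2 x2 y2); have le2 := Rmax_r (d1 x1 y1) (d2 x2 y2).
    have ge1 := dist_ge0 m1 x1 y1; have ge2 := dist_ge0 m2 x2 y2.
    rewrite dxy0 in le1 le2; congr pair; [apply/d01 | apply/d02]; lra.
  + rewrite (proj2 (d01 x1 x1) erefl) (proj2 (d02 x2 x2) erefl).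
    by apply: Rmax_left; apply: Rle_refl.
- by move=> x y; rewrite dC1 dC2.
- move=> x y z; apply: Rmax_lub.
  + apply: Rle_trans (dtri1 _ y.1 _) _.
    by apply: Rplus_le_compat; apply: Rmax_l.
  + apply: Rle_trans (dtri2 _ y.2 _) _.
    by apply: Rplus_le_compat; apply: Rmax_r.
Qed.

Lemma prod_mean_is_mean n (A : ('I_n -> X) -> X) (B : ('I_n -> Y) -> Y) :
  is_mean A -> is_mean B -> is_mean (prod_mean A B).
Proof. by move=> meanA meanB [x y]; rewrite /prod_mean meanA meanB. Qed.

Lemma prod_mean_nonexpansive n (A : ('I_n -> X) -> X) (B : ('I_n -> Y) -> Y) :
  nonexpansive d1 A -> nonexpansive d2 B -> nonexpansive d (prod_mean A B).
Proof.
move=> neA neB z w; have s_ge0 := sup_dist_ge0 d z w.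
apply: Rmax_lub.
- apply: Rle_trans (neA _ _) _; apply: sup_dist_le => // i.
  exact: Rle_trans (Rmax_l _ _) (le_sup_dist d z w i).
- apply: Rle_trans (neB _ _) _; apply: sup_dist_le => // i.
  exact: Rle_trans (Rmax_r _ _) (le_sup_dist d z w i).
Qed.

Lemma prod_mean_coord_contractive n rho rho'
    (A : ('I_n -> X) -> X) (B : ('I_n -> Y) -> Y) :
  is_metric d1 -> is_metric d2 -> 0 <= rho -> 0 <= rho' ->
  coord_contractive d1 rho A -> coord_contractive d2 rho' B ->
  coord_contractive d (Rmax rho rho') (prod_mean A B).
Proof.
move=> m1 m2 rho_ge0 rho'_ge0 ccA ccB z w j eq_zw.
have ccA_j := ccA _ (fun i => (w i).1) j (fun i ij => f_equal fst (eq_zw i ij)).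
have ccB_j := ccB _ (fun i => (w i).2) j (fun i ij => f_equal snd (eq_zw i ij)).
apply: Rmax_lub.
- apply: Rle_trans ccA_j _; apply: Rmult_le_compat => //; try exact: Rmax_l.
  exact: dist_ge0.
- apply: Rle_trans ccB_j _; apply: Rmult_le_compat => //; try exact: Rmax_r.
  exact: dist_ge0.
Qed.

Lemma iter_barycentric_prod_mean n (A : ('I_n -> X) -> X) (B : ('I_n -> Y) -> Y)
    (z : 'I_n.+1 -> X * Y) m :
  iter m (barycentric (prod_mean A B)) z =
  fun j => (iter m (barycentric A) (fun i => (z i).1) j,
            iter m (barycentric B) (fun i => (z i).2) j).
Proof.
elim: m => [|m IHm] /=; last by rewrite IHm.
by apply: functional_extensionality => j; case: (z j).
Qed.

Lemma seq_converges_pair n (u : nat -> 'I_n -> X) (v : nat -> 'I_n -> Y) a b :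
  seq_converges (@sup_dist X d1 n) u a -> seq_converges (@sup_dist Y d2 n) v b ->
  seq_converges (@sup_dist _ d n) (fun m j => (u m j, v m j)) (fun j => (a j, b j)).
Proof.
move=> cvg_u cvg_v eps eps_gt0.
have [Ku Hu] := cvg_u eps eps_gt0; have [Kv Hv] := cvg_v eps eps_gt0.
exists (maxn Ku Kv) => m le_Km.
pose s := Rmax (sup_dist d1 (u m) a) (sup_dist d2 (v m) b).
have s_lt : s < eps.
  apply: Rmax_lub_lt; [apply: Hu | apply: Hv];
    by apply: leq_trans le_Km; rewrite ?leq_maxl ?leq_maxr.
apply: Rle_lt_trans s_lt; apply: sup_dist_le => [|i].
  exact: Rle_trans (sup_dist_ge0 _ _ _) (Rmax_l _ _).
apply: Rmax_lub => /=.
- exact: Rle_trans (le_sup_dist d1 (u m) a i) (Rmax_l _ _).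
- exact: Rle_trans (le_sup_dist d2 (v m) b i) (Rmax_r _ _).
Qed.

Lemma beta_extends_prod_mean n (A : ('I_n -> X) -> X) (B : ('I_n -> Y) -> Y)
    (A' : ('I_n.+1 -> X) -> X) (B' : ('I_n.+1 -> Y) -> Y) :
  beta_extends d1 A A' -> beta_extends d2 B B' ->
  beta_extends d (prod_mean A B) (prod_mean A' B').
Proof.
move=> [meanA' cvgA] [meanB' cvgB]; split; first exact: prod_mean_is_mean.
move=> z; rewrite [fun m => _](functional_extensionality _ _
  (iter_barycentric_prod_mean A B z)).
exact: seq_converges_pair.
Qed.

End ProductMean.

Theorem theorem7p5 (X Y : Type) (d1 : X -> X -> R) (d2 : Y -> Y -> R)
  (k : nat) (rho rho' : R)
  (mu : ('I_k -> X) -> X) (nu : ('I_k -> Y) -> Y) :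
  is_metric d1 -> complete_metric d1 ->
  is_metric d2 -> complete_metric d2 ->
  (2 <= k)%nat ->
  Rlt 0 rho -> Rlt rho 1 -> Rlt 0 rho' -> Rlt rho' 1 ->
  is_mean mu -> nonexpansive d1 mu -> coord_contractive d1 rho mu ->
  is_mean nu -> nonexpansive d2 nu -> coord_contractive d2 rho' nu ->
  (is_mean (prod_mean mu nu) /\
   nonexpansive (prod_dist d1 d2) (prod_mean mu nu) /\
   coord_contractive (prod_dist d1 d2) (Rmax rho rho') (prod_mean mu nu)) /\
  (forall (M : forall n : nat, ('I_n -> X) -> X)
          (N : forall n : nat, ('I_n -> Y) -> Y)
          (P : forall n : nat, ('I_n -> (X * Y)%type) -> (X * Y)%type),
     iterated_beta_ext d1 mu M ->
     iterated_beta_ext d2 nu N ->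
     iterated_beta_ext (prod_dist d1 d2) (prod_mean mu nu) P ->
     forall n : nat, (k <= n)%nat -> P n = prod_mean (M n) (N n)).
Proof.
move=> m1 _ m2 _ _ rho_gt0 _ rho'_gt0 _ meanmu nemu ccmu meannu nenu ccnu.
split.
  split; first exact: prod_mean_is_mean.
  split; first exact: prod_mean_nonexpansive.
  by apply: prod_mean_coord_contractive => //; apply: Rlt_le.
move=> M N P [M_k extM] [N_k extN] [P_k extP] n /subnK <-.
elim: (n - k)%nat => [|m IHm]; first by rewrite add0n P_k M_k N_k.
have le_k_mk : (k <= m + k)%nat by exact: leq_addl.
rewrite addSn; have := proj2 (extP _ le_k_mk); rewrite IHm => extP_mk.
apply: (beta_extends_unique (prod_dist_is_metric m1 m2) extP_mk).
exact: beta_extends_prod_mean (proj2 (extM _ le_k_mk)) (proj2 (extN _ le_k_mk)).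
Qed.
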